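(* In the setting of the context, let $\{\mu_k\}_{k\in\mathbb{N}}$ be a strictly decreasing sequence of positive scalars and $\{w_k\}_{k\in\mathbb{N}}$ a sequence with $\|F^{\mu_k}(w_{k+1})\|\le\epsilon(\mu_k)$ for all $k$, such that for a subsequence indexed by $\mathcal K$, $w_{k+1}\to w^*$ as $k\in\mathcal K\to\infty$. Then for all $k\in\mathcal K$ sufficiently large, $$w^{w^*,1}_{k+1}=w_{k+1}-J_F(w_{k+1})^{-1}F^{\mu_{k+1}}(w_{k+1}),$$ i.e. $w^{w^*,1}_{k+1}-w_{k+1}$ is the Newton step for finding a root of $F^{\mu_{k+1}}$ at $w_{k+1}$.
   Context: Problem: minimize $f(x)$ subject to $c_{\mathcal I}(x)\ge0$, $c_{\mathcal E}(x)=0$, with $f,c_i\colon\mathbb{R}^n\to\mathbb{R}$, $c=(c_{\mathcal I}^T,c_{\mathcal E}^T)^T\in\mathbb{R}^m$, and $d\ge3$ the smallest number of times each of $f,c_1,\dots,c_m$ is continuously differentiable. Notation: $g=\nabla f$, $A$ the Jacobian of $c$, $H(x,\lambda)$ the Hessian in $x$ of $f(x)-\lambda^Tc(x)$, $[v]_S$ components of $v$ indexed by $S$, uppercase = diagonal matrix of the lowercase vector, $e$ the all-ones vector, $w=(x,\lambda)$. $F^\mu(x,\lambda)=\bigl(g(x)-A(x)^T\lambda;\ C_{\mathcal I}(x)[\lambda]_{\mathcal I}-\mu e;\ c_{\mathcal E}(x)\bigr)$ and $J_F$ denotes its Jacobian with respect to $w$ (independent of $\mu$). Let $x^*$ be a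 KKT point at which LICQ, strict complementarity (multiplier $\lambda^*$ with $[\lambda^*]_i>0$ for active inequality indices) and the strong second-order sufficiency condition ($p^TH(x^*,\lambda^* )p\ge\omega\|p\|^2$, $\omega>0$, for all $p$ orthogonal to all active constraint gradients) hold; $\lambda^*$ is unique; $w^*=(x^*,\lambda^* )$. Let $w^{w^*,0}$ be the locally unique $(d-1)$ times continuously differentiable function near $0$ with $F^0(w^{w^*,0}(r))=r$, $w^{w^*,0}(0)=w^*$. With $\mathrm{nml}(r)=r/\|r\|$ for $r\ne0$, $\mathrm{nml}(0)=0$, define for $\mu,r$ sufficiently small $w^{w^*,\mu,r}(\rho)=w^{w^*,0}\bigl(\rho\,\mathrm{nml}(r)+(0,\mu e^T,0)^T\bigr)$ (blocks of sizes $n,m_{\mathcal I},m_{\mathcal E}$). Set $r_{k+1}=F^{\mu_{k+1}}(w_{k+1})$ and let $w^{w^*,1}_{k+1}$ be the value at $\rho=0$ of the first-order Taylor polynomial of $\rho\mapsto w^{w^*,\mu_{k+1},r_{k+1}}(\rho)$ about $\rho=\|r_{k+1}\|$. $\epsilon$ is a positive function with $\epsilon(\mu)=\Theta(\mu)$. *)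

From HB Require Import structures.
From mathcomp Require Import all_boot all_order all_algebra.
From mathcomp Require Import all_classical all_reals all_analysis.
Set Implicit Arguments. Unset Strict Implicit. Unset Printing Implicit Defensive.
Import Order.TTheory GRing.Theory Num.Theory.
Import numFieldNormedType.Exports.
Local Open Scope classical_set_scope.
Local Open Scope ring_scope.

Definition ebasis (R : realType) (p : nat) (i : 'I_p) : 'cV[R]_p := delta_mx i 0.

Definition enorm (R : realType) (p : nat) (v : 'cV[R]_p) : R :=
  Num.sqrt (\sum_(i < p) v i 0 ^+ 2).

Definition nml (R : realType) (p : nat) (r : 'cV[R]_p) : 'cV[R]_p :=
  if r == 0 then 0 else (enorm r)^-1 *: r.

Fixpoint CkOn (R : realType) (p : nat) (W : normedModType R) (k : nat)
  (U : set 'cV[R]_p) (f : 'cV[R]_p -> W) {struct k} : Prop :=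
  match k with
  | 0 => forall x, U x -> {for x, continuous f}
  | k'.+1 => (forall x, U x -> differentiable f x) /\
             forall j : 'I_p, CkOn k' U (fun x => 'D_(ebasis R j) f x)
  end.

Definition jac (R : realType) (p q : nat) (G : 'cV[R]_p -> 'cV[R]_q)
  (w : 'cV[R]_p) : 'M[R]_(q, p) :=
  \matrix_(i, j) ('D_(ebasis R j) G w) i 0.

Definition grad (R : realType) (p : nat) (phi : 'cV[R]_p -> R) (x : 'cV[R]_p)
  : 'cV[R]_p := \col_i ('D_(ebasis R i) phi x).

Definition hess (R : realType) (p : nat) (phi : 'cV[R]_p -> R) (x : 'cV[R]_p)
  : 'M[R]_p := jac (grad phi) x.

Definition cfun (R : realType) (n mI mE : nat) (cI : 'cV[R]_n -> 'cV[R]_mI)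
  (cE : 'cV[R]_n -> 'cV[R]_mE) (x : 'cV[R]_n) : 'cV[R]_(mI + mE) :=
  col_mx (cI x) (cE x).

Definition Amat (R : realType) (n mI mE : nat) (cI : 'cV[R]_n -> 'cV[R]_mI)
  (cE : 'cV[R]_n -> 'cV[R]_mE) (x : 'cV[R]_n) : 'M[R]_(mI + mE, n) :=
  jac (cfun cI cE) x.

Definition Hlag (R : realType) (n mI mE : nat) (f : 'cV[R]_n -> R)
  (cI : 'cV[R]_n -> 'cV[R]_mI) (cE : 'cV[R]_n -> 'cV[R]_mE)
  (x : 'cV[R]_n) (lam : 'cV[R]_(mI + mE)) : 'M[R]_n :=
  hess (fun y => f y - (lam^T *m cfun cI cE y) 0 0) x.

Definition Fmu (R : realType) (n mI mE : nat) (f : 'cV[R]_n -> R)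
  (cI : 'cV[R]_n -> 'cV[R]_mI) (cE : 'cV[R]_n -> 'cV[R]_mE) (mu : R)
  (w : 'cV[R]_(n + (mI + mE))) : 'cV[R]_(n + (mI + mE)) :=
  let x := usubmx w in
  let lam := dsubmx w in
  col_mx (grad f x - (Amat cI cE x)^T *m lam)
         (col_mx (\col_i (cI x i 0 * usubmx lam i 0 - mu)) (cE x)).

(* J_F: Jacobian of F^mu with respect to w (independent of mu; we use mu = 0) *)
Definition JF (R : realType) (n mI mE : nat) (f : 'cV[R]_n -> R)
  (cI : 'cV[R]_n -> 'cV[R]_mI) (cE : 'cV[R]_n -> 'cV[R]_mE)
  (w : 'cV[R]_(n + (mI + mE))) : 'M[R]_(n + (mI + mE)) :=
  jac (Fmu f cI cE 0) w.

Definition muvec (R : realType) (n mI mE : nat) (mu : R) : 'cV[R]_(n + (mI + mE)) :=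
  col_mx 0 (col_mx (const_mx mu) 0).

Definition KKT (R : realType) (n mI mE : nat) (f : 'cV[R]_n -> R)
  (cI : 'cV[R]_n -> 'cV[R]_mI) (cE : 'cV[R]_n -> 'cV[R]_mE)
  (xs : 'cV[R]_n) (lams : 'cV[R]_(mI + mE)) : Prop :=
  [/\ grad f xs - (Amat cI cE xs)^T *m lams = 0,
      cE xs = 0,
      forall i : 'I_mI, 0 <= cI xs i 0,
      forall i : 'I_mI, 0 <= usubmx lams i 0
    & forall i : 'I_mI, cI xs i 0 * usubmx lams i 0 = 0].

Definition active (R : realType) (n mI mE : nat) (cI : 'cV[R]_n -> 'cV[R]_mI)
  (xs : 'cV[R]_n) (j : 'I_(mI + mE)) : Prop :=
  match fintype.split j with
  | inl i => cI xs i 0 = 0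
  | inr _ => True
  end.

Definition LICQ (R : realType) (n mI mE : nat) (cI : 'cV[R]_n -> 'cV[R]_mI)
  (cE : 'cV[R]_n -> 'cV[R]_mE) (xs : 'cV[R]_n) : Prop :=
  forall v : 'cV[R]_(mI + mE),
    (forall j, ~ active cI xs j -> v j 0 = 0) ->
    (Amat cI cE xs)^T *m v = 0 -> v = 0.

Definition strict_compl (R : realType) (n mI : nat) (cI : 'cV[R]_n -> 'cV[R]_mI)
  (mE : nat) (xs : 'cV[R]_n) (lams : 'cV[R]_(mI + mE)) : Prop :=
  forall i : 'I_mI, cI xs i 0 = 0 -> 0 < usubmx lams i 0.

Definition SSOSC (R : realType) (n mI mE : nat) (f : 'cV[R]_n -> R)
  (cI : 'cV[R]_n -> 'cV[R]_mI) (cE : 'cV[R]_n -> 'cV[R]_mE)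
  (xs : 'cV[R]_n) (lams : 'cV[R]_(mI + mE)) : Prop :=
  exists2 om : R, 0 < om &
    forall p : 'cV[R]_n,
      (forall j, active cI xs j -> (Amat cI cE xs *m p) j 0 = 0) ->
      om * enorm p ^+ 2 <= (p^T *m Hlag f cI cE xs lams *m p) 0 0.

Definition is_w0 (R : realType) (n mI mE : nat) (f : 'cV[R]_n -> R)
  (cI : 'cV[R]_n -> 'cV[R]_mI) (cE : 'cV[R]_n -> 'cV[R]_mE) (d : nat)
  (ws : 'cV[R]_(n + (mI + mE)))
  (W0 : 'cV[R]_(n + (mI + mE)) -> 'cV[R]_(n + (mI + mE))) : Prop :=
  W0 0 = ws /\
  exists (Nr Nw : set 'cV[R]_(n + (mI + mE))),
    [/\ open Nr /\ Nr 0, open Nw /\ Nw ws,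
        CkOn d.-1 Nr W0 &
        forall r, Nr r ->
          [/\ Nw (W0 r), Fmu f cI cE 0 (W0 r) = r &
              forall w, Nw w -> Fmu f cI cE 0 w = r -> w = W0 r]].

Definition wmur (R : realType) (n mI mE : nat)
  (W0 : 'cV[R]_(n + (mI + mE)) -> 'cV[R]_(n + (mI + mE)))
  (mu : R) (r : 'cV[R]_(n + (mI + mE))) (rho : R) : 'cV[R]_(n + (mI + mE)) :=
  W0 (rho *: nml r + muvec n mI mE mu).

(* value at rho = 0 of the first-order Taylor polynomial of rho |-> wmur mu r rho
   about rho0 = ||r|| *)
Definition w1 (R : realType) (n mI mE : nat)
  (W0 : 'cV[R]_(n + (mI + mE)) -> 'cV[R]_(n + (mI + mE)))
  (mu : R) (r : 'cV[R]_(n + (mI + mE))) : 'cV[R]_(n + (mI + mE)) :=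
  let rho0 := enorm r in
  wmur W0 mu r rho0 + (0 - rho0) *: derive1 (wmur W0 mu r) rho0.

Definition ThetaId (R : realType) (eps : R -> R) : Prop :=
  exists c1 c2 delta : R, [/\ 0 < c1, 0 < c2, 0 < delta &
    forall mu, 0 < mu < delta -> c1 * mu <= eps mu <= c2 * mu].

From HB Require Import structures.
From mathcomp Require Import all_boot all_order all_algebra.
From mathcomp Require Import all_classical all_reals all_analysis.
Import Order.TTheory GRing.Theory Num.Theory.
Import numFieldNormedType.Exports.
Local Open Scope classical_set_scope.
Local Open Scope ring_scope.

(* The map [W0] is a local inverse of [F^0] near [w*], so by the chain rule
   [J_F (W0 y)] is invertible with inverse the Jacobian of [W0] at [y].  Once
   [w_(k+1)] is close enough to [w*], local uniqueness gives
   [w_(k+1) = W0 (F^0 w_(k+1))].  As [F^mu = F^0 - (0, mu e, 0)], the curve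
   [rho |-> w^(w*,mu,r)(rho)] with [r = F^mu w_(k+1)] passes through [w_(k+1)]
   at [rho = ||r||] with velocity [J_F(w_(k+1))^-1 (r / ||r||)], so its
   first-order Taylor polynomial at [0] is [w_(k+1) - J_F(w_(k+1))^-1 r]. *)

Section ColumnDifferentiable.
Context {R : realType}.

Lemma differentiable_cV (V : normedModType R) q (G : V -> 'cV[R]_q) w :
  (forall i, differentiable (fun x => G x i 0) w) -> differentiable G w.
Proof.
move=> dG.
have -> : G = \sum_(i < q) (fun x => G x i 0 *: (delta_mx i 0 : 'cV[R]_q)).
  apply/funext => x; rewrite fct_sumE {1}(matrix_sum_delta (G x)).
  by apply: eq_bigr => i _; rewrite big_ord1.
by apply: differentiable_sum => i; apply: differentiableZl.
Qed.

Lemma differentiable_entry {V : normedModType R} {q} {G : V -> 'cV[R]_q} {w} i :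
  differentiable G w -> differentiable (fun x => G x i 0) w.
Proof. by move=> dG; apply: differentiable_comp dG (differentiable_coord _ _ _).
Qed.

Lemma differentiable_sum_pointwise (V W : normedModType R) q
    (g : 'I_q -> V -> W) x :
  (forall i, differentiable (g i) x) ->
  differentiable (fun y => \sum_(i < q) g i y) x.
Proof. by move=> dg; rewrite -fct_sumE; apply: differentiable_sum. Qed.

Lemma differentiable_col_mx (V : normedModType R) q1 q2
    (G1 : V -> 'cV[R]_q1) (G2 : V -> 'cV[R]_q2) w :
  differentiable G1 w -> differentiable G2 w ->
  differentiable (fun x => col_mx (G1 x) (G2 x)) w.
Proof.
move=> dG1 dG2; apply: differentiable_cV => k.
case: (split_ordP k) => j ->.
  by under eq_fun do rewrite col_mxEu; exact: differentiable_entry.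
by under eq_fun do rewrite col_mxEd; exact: differentiable_entry.
Qed.

Lemma differentiable_usubmx_comp {V : normedModType R} {p q}
    (g : 'cV[R]_p -> V) {w : 'cV[R]_(p + q)} :
  differentiable g (usubmx w) -> differentiable (fun x => g (usubmx x)) w.
Proof.
apply: differentiable_comp; apply: differentiable_cV => i.
under eq_fun do rewrite mxE; exact: differentiable_coord.
Qed.

Lemma differentiable_dsubmx p q (w : 'cV[R]_(p + q)) :
  differentiable (@dsubmx R p q 1) w.
Proof.
apply: differentiable_cV => i.
under eq_fun do rewrite mxE; exact: differentiable_coord.
Qed.

Lemma jac_coord {p q} {G : 'cV[R]_p -> 'cV[R]_q} {x} i j :
  differentiable G x -> jac G x i j = 'D_(ebasis R j) (fun y => G y i 0) x.
Proof. by move=> dG; rewrite mxE derive_mx ?mxE //; apply: diff_derivable. Qed.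

Lemma diff_jac p q (G : 'cV[R]_p -> 'cV[R]_q) x u :
  differentiable G x -> 'd G x u = jac G x *m u.
Proof.
move=> dG; rewrite {1}(matrix_sum_delta u) linear_sum.
apply/matrixP => i k; rewrite (ord1 k) !mxE summxE.
apply: eq_bigr => j _.
by rewrite big_ord1 linearZ /= -deriveE // !mxE mulrC.
Qed.

Lemma jac_local_inverse {p} {F G : 'cV[R]_p -> 'cV[R]_p} {U : set 'cV[R]_p} y :
  open U -> U y -> (forall z, U z -> F (G z) = z) ->
  differentiable G y -> differentiable F (G y) ->
  jac F (G y) \in unitmx /\ invmx (jac F (G y)) = jac G y.
Proof.
move=> oU Uy FG dG dF.
have FG_id (v : 'cV[R]_p) : (jac F (G y) *m jac G y) *m v = v.
  have : 'D_v (F \o G) y = 'D_v id y.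
    apply: near_eq_derive; apply: filterS (open_nbhs_nbhs (conj oU Uy)).
    by move=> z Uz; rewrite /= FG.
  rewrite derive_id deriveE; last exact: differentiable_comp.
  by rewrite diff_comp // /= !diff_jac // mulmxA.
have JJ : jac F (G y) *m jac G y = 1%:M.
  apply/matrixP => i j.
  have := congr1 (fun M : 'cV[R]_p => M i 0) (FG_id (delta_mx j 0)).
  by rewrite -colE !mxE andbT.
have [uF _] := mulmx1_unit JJ.
by split => //; rewrite -[RHS](mulKmx uF) JJ mulmx1.
Qed.

Lemma derive1_ray (V : normedModType R) p (G : 'cV[R]_p -> V) u m rho0 :
  derive1 (fun rho : R => G (rho *: u + m)) rho0 = 'D_u G (rho0 *: u + m).
Proof.
rewrite derive1E /derive.
by under eq_fun do rewrite /= [_%:A]mulr1 scalerDl -addrA.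
Qed.

End ColumnDifferentiable.

Section Smoothness.
Context {R : realType} {p : nat} {W : normedModType R}.

Lemma CkOn_differentiable {k U} {g : 'cV[R]_p -> W} {x} :
  CkOn k.+1 U g -> U x -> differentiable g x.
Proof. by case=> dg _; apply: dg. Qed.

Lemma CkOn_partial_differentiable {k U} {g : 'cV[R]_p -> W} {j x} :
  CkOn k.+2 U g -> U x -> differentiable ('D_(ebasis R j) g) x.
Proof. by case=> _ /(_ j) [dg _]; apply: dg. Qed.

End Smoothness.

Lemma CkOn_cfun_entry {R : realType} {n mI mE k} {U : set 'cV[R]_n}
    {cI : 'cV[R]_n -> 'cV[R]_mI} {cE : 'cV[R]_n -> 'cV[R]_mE} :
  (forall i, CkOn k U (fun x => cI x i 0)) ->
  (forall i, CkOn k U (fun x => cE x i 0)) ->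
  forall j, CkOn k U (fun x => cfun cI cE x j 0).
Proof.
move=> CI CE j; case: (split_ordP j) => i ->.
  by under eq_fun do rewrite col_mxEu.
by under eq_fun do rewrite col_mxEd.
Qed.

Section EuclideanNorm.
Context {R : realType} {p : nat}.
Implicit Type v : 'cV[R]_p.

Lemma coord_le_enorm v i : `|v i 0| <= enorm v.
Proof.
have sum_ge0 P : 0 <= \sum_(j < p | P j) v j 0 ^+ 2.
  by apply: sumr_ge0 => j _; exact: sqr_ge0.
by rewrite /enorm -sqrtr_sqr ler_sqrt // (bigD1 i) //= lerDl.
Qed.

Lemma enorm_eq0 v : (enorm v == 0) = (v == 0).
Proof.
have sq_ge0 (j : 'I_p) : true -> 0 <= v j 0 ^+ 2 by move=> _; exact: sqr_ge0.
rewrite sqrtr_eq0 le_eqVlt ltNge sumr_ge0 // orbF psumr_eq0 //.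
apply/allP/eqP => [v0|-> j _]; last by rewrite /= mxE expr2 mul0r.
apply/matrixP => i j; rewrite (ord1 j) mxE.
by apply/eqP; rewrite -sqrf_eq0; apply: v0; rewrite mem_index_enum.
Qed.

Lemma enorm_scale_nml v : enorm v *: nml v = v.
Proof.
rewrite /nml; case: eqP => [->|/eqP v0]; first by rewrite scaler0.
by rewrite scalerA mulfV ?scale1r ?enorm_eq0.
Qed.

Lemma nbhs_enorm_ball {A : set 'cV[R]_p} {x : 'cV[R]_p} : nbhs x A ->
  exists2 e : R, 0 < e & forall v, enorm (v - x) < e -> A v.
Proof.
move=> /nbhs_ballP [e e0 sub]; exists e => // v hv; apply: sub.
rewrite -ball_normE /ball_ /= distrC [X in X < _]/Num.Def.normr /= mx_normrE.
apply: bigmax_lt => // -[i j] _ /=; rewrite (ord1 j).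
exact: le_lt_trans (coord_le_enorm (v - x) i) hv.
Qed.

End EuclideanNorm.

Lemma ray_tangent_at0 (R : realType) p (G : 'cV[R]_p -> 'cV[R]_p) r m :
  differentiable G (r + m) ->
  G (enorm r *: nml r + m)
    + (0 - enorm r) *: derive1 (fun rho => G (rho *: nml r + m)) (enorm r)
  = G (r + m) - jac G (r + m) *m r.
Proof.
move=> dG; rewrite derive1_ray enorm_scale_nml deriveE // diff_jac //.
by rewrite sub0r scaleNr scalemxAr enorm_scale_nml.
Qed.

Lemma Fmu_shift {R : realType} {n mI mE} (f : 'cV[R]_n -> R)
    (cI : 'cV[R]_n -> 'cV[R]_mI) (cE : 'cV[R]_n -> 'cV[R]_mE) mu w :
  Fmu f cI cE mu w = Fmu f cI cE 0 w - muvec n mI mE mu.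
Proof.
rewrite /Fmu /muvec /= !opp_col_mx !add_col_mx !oppr0 !addr0.
by congr (col_mx _ (col_mx _ _)); apply/matrixP => i j; rewrite !mxE addr0.
Qed.

Section FmuDifferentiable.
Context {R : realType} {n mI mE k : nat} {f : 'cV[R]_n -> R}
  {cI : 'cV[R]_n -> 'cV[R]_mI} {cE : 'cV[R]_n -> 'cV[R]_mE}.
Hypothesis Cf : CkOn k.+2 setT f.
Hypothesis CcI : forall i, CkOn k.+2 setT (fun x => cI x i 0).
Hypothesis CcE : forall i, CkOn k.+2 setT (fun x => cE x i 0).

Lemma Amat_entry_differentiable j i x :
  differentiable (fun y => Amat cI cE y j i) x.
Proof.
have Cc := CkOn_cfun_entry CcI CcE.
have dc y : differentiable (cfun cI cE) y.
  by apply: differentiable_cV => l; apply: CkOn_differentiable (Cc l) _.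
under eq_fun do rewrite /Amat (jac_coord j i (dc _)).
exact: CkOn_partial_differentiable (Cc j) _.
Qed.

Lemma Fmu_differentiable mu w : differentiable (Fmu f cI cE mu) w.
Proof.
apply: differentiable_col_mx; [|apply: differentiable_col_mx].
- apply: differentiable_cV => i; under eq_fun do rewrite !mxE.
  apply: differentiableB.
    apply: (differentiable_usubmx_comp ('D_(ebasis R i) f)).
    exact: CkOn_partial_differentiable Cf I.
  apply: differentiable_sum_pointwise => j; apply: differentiableM.
    under eq_fun do rewrite mxE.
    apply: (differentiable_usubmx_comp (fun x => Amat cI cE x j i)).
    exact: Amat_entry_differentiable.
  exact/differentiable_entry/differentiable_dsubmx.
- apply: differentiable_cV => i; under eq_fun do rewrite !mxE.
  apply: differentiableB; last exact: differentiable_cst.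
  apply: differentiableM; last exact: differentiable_coord.
  apply: (differentiable_usubmx_comp (fun x => cI x i 0)).
  exact: CkOn_differentiable (CcI i) I.
- apply: (differentiable_usubmx_comp cE); apply: differentiable_cV => i.
  exact: CkOn_differentiable (CcE i) I.
Qed.
End FmuDifferentiable.

Theorem proposition1 (R : realType) (n mI mE d : nat)
  (f : 'cV[R]_n -> R) (cI : 'cV[R]_n -> 'cV[R]_mI) (cE : 'cV[R]_n -> 'cV[R]_mE)
  (xs : 'cV[R]_n) (lams : 'cV[R]_(mI + mE))
  (W0 : 'cV[R]_(n + (mI + mE)) -> 'cV[R]_(n + (mI + mE)))
  (eps : R -> R) (mu : nat -> R) (w : nat -> 'cV[R]_(n + (mI + mE)))
  (K : set nat) :
  (3 <= d)%N ->
  CkOn d setT f ->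
  (forall i : 'I_mI, CkOn d setT (fun x => cI x i 0)) ->
  (forall i : 'I_mE, CkOn d setT (fun x => cE x i 0)) ->
  KKT f cI cE xs lams ->
  LICQ cI cE xs ->
  strict_compl cI xs lams ->
  SSOSC f cI cE xs lams ->
  is_w0 f cI cE d (col_mx xs lams) W0 ->
  (forall m, 0 < m -> 0 < eps m) ->
  ThetaId eps ->
  (forall k, 0 < mu k) ->
  (forall k, mu k.+1 < mu k) ->
  (forall k, enorm (Fmu f cI cE (mu k) (w k.+1)) <= eps (mu k)) ->
  (forall N, exists k, K k /\ (N <= k)%N) ->
  (forall e : R, 0 < e -> exists N, forall k, K k -> (N <= k)%N ->
      enorm (w k.+1 - col_mx xs lams) < e) ->
  exists N, forall k, K k -> (N <= k)%N ->
    JF f cI cE (w k.+1) \in unitmx /\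
    w1 W0 (mu k.+1) (Fmu f cI cE (mu k.+1) (w k.+1))
      = w k.+1 - invmx (JF f cI cE (w k.+1)) *m Fmu f cI cE (mu k.+1) (w k.+1).
Proof.
move=> d3 Cf CI CE _ _ _ _ [W0ws [Nr [Nw [[oNr Nr0] [oNw Nws] CW0 HW0]]]].
move=> _ _ _ _ _ _ conv.
case: d d3 Cf CI CE CW0 => [|[|[|d]]] // _ Cf CI CE CW0.
pose F0 := Fmu f cI cE 0.
have dF0 v : differentiable F0 v := Fmu_differentiable Cf CI CE 0 v.
have dW0 y : Nr y -> differentiable W0 y := CkOn_differentiable CW0.
have F0W0 y : Nr y -> F0 (W0 y) = y by case/HW0.
have near_ws : nbhs (col_mx xs lams) (Nw `&` F0 @^-1` Nr).
  apply: filterI; first exact: open_nbhs_nbhs.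
  apply: (differentiable_continuous (dF0 _)).
  by rewrite -W0ws F0W0 //; apply: open_nbhs_nbhs.
have [e e0 ball_in] := nbhs_enorm_ball near_ws.
have [N conv_e] := conv e e0.
exists N => k Kk Nk.
have [Nw_w Nr_y] : Nw (w k.+1) /\ Nr (F0 (w k.+1)).
  exact: ball_in _ (conv_e k Kk Nk).
set y := F0 (w k.+1) in Nr_y *.
have W0y : W0 y = w k.+1 by have [_ _ uniq] := HW0 y Nr_y; exact/esym/uniq.
have := jac_local_inverse y oNr Nr_y F0W0 (dW0 y Nr_y) (dF0 _).
rewrite W0y => -[uJ invJ]; split => //.
rewrite /JF -/F0 invJ /w1 /wmur (Fmu_shift f cI cE (mu k.+1)).
rewrite ray_tangent_at0 subrK ?W0y //.
exact: dW0 y Nr_y.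
Qed.
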